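(* Let $T$ be a consistent and computably enumerable theory which represents every computable function. Let $g\colon\mathbb{N}\to\mathbb{N}$ be computable, monotone, with $g(n) = \Omega(n)$, and let $f\colon\mathbb{N}\to\mathbb{N}$ satisfy $f(n+1) = o(g(n))$. Then for every canonical proof verifier $\mathrm{pc}$ for $T$ there exists a proof problem $\mathbf{A}$ (with respect to $T$ and $\mathrm{pc}$) whose proof complexity is $O(g(n))$ but not $O(f(n))$.
   Context: A theory is a set of first-order sentences with equality closed under logical consequence; representability presupposes $T$ contains $\forall x\colon \neg\, Sx = 0$, $\forall x,y\colon Sx = Sy \rightarrow x=y$, $\forall x\colon x = 0 \lor \exists y\colon Sy = x$. Formal strings and lists of strings are identified with natural numbers by base-$k$ reading. A partial function $f$ is represented in $T$ by $\langle f\rangle(\mathbf{x},y)$ if whenever $f(\mathbf{x})=y$, $T \vdash \exists! y'\colon \langle f\rangle(\overline{\mathbf{x}}, y') \land \langle f\rangle(\overline{\mathbf{x}}, \overline{y})$. With $✗,✓$ distinct constants, a proof verifier for $T$ is $\mathrm{pc}\colon\mathbb{N}^2\to\{✗,✓\}$ with: if $T\vdash A$ then $\mathrm{pc}(p,A)=✓$ for some $p$, otherwise $\mathrm{pc}(p,A)=✗$ for all $p$; $T$ is computably enumerable if it has a computable proof verifier. A proof verifier is canonical if whenever $\mathrm{pc}(p,A)=✓$, $p$ is a list containing only theorems of $T$ or valid sub-proofs, and whenever $B$ follows from the items of $p$ by the usual rules of inference then $\mathrm{pc}(p \mathbin{+\!\!+} [B], B) = ✓$ (where $\mathbin{+\!\!+}$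 is list concatenation); in particular proofs of $A$ and of $B$ can be combined into a proof of $A\land B$, and a proof of $A \land B$ extended to proofs of $A$ and of $B$. $|x|$ denotes the number of digits of $x$. A proof problem is any set of sentences $\mathbf{A}\subseteq T$; $p$ $\mathrm{pc}$-decides $A$ if $\mathrm{pc}(p,A)=✓$ or $\mathrm{pc}(p,\neg A)=✓$; the proof complexity of $\mathbf{A}$ is $h(n) = \max_{A\in\mathbf{A},\, |A|\le n}\ \min_{p\ \mathrm{pc}\text{-decides } A} |p|$. *)

From Stdlib Require Import List.
From mathcomp Require Import all_boot.
Set Implicit Arguments. Unset Strict Implicit. Unset Printing Implicit Defensive.

Inductive prog : Type :=
| pZero | pSucc | pProj (i : nat) | pComp (f : prog) (gs : seq prog)
| pPrec (f g : prog) | pMin (f : prog).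

Inductive eval : prog -> seq nat -> nat -> Prop :=
| eZero v : eval pZero v 0
| eSucc x v : eval pSucc (x :: v) x.+1
| eProj i v : i < size v -> eval (pProj i) v (nth 0 v i)
| eComp f gs v ys y : evals gs v ys -> eval f ys y -> eval (pComp f gs) v y
| ePrec0 f g v y : eval f v y -> eval (pPrec f g) (0 :: v) y
| ePrecS f g n v r y : eval (pPrec f g) (n :: v) r -> eval g (n :: r :: v) y ->
    eval (pPrec f g) (n.+1 :: v) y
| eMin f v y : eval f (y :: v) 0 ->
    (forall z, z < y -> exists r, eval f (z :: v) r.+1) -> eval (pMin f) v y
with evals : seq prog -> seq nat -> seq nat -> Prop :=
| esNil v : evals [::] v [::]
| esCons g gs v y ys : eval g v y -> evals gs v ys -> evals (g :: gs) v (y :: ys).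

Definition computable1 (g : nat -> nat) : Prop :=
  exists c, forall n, eval c [:: n] (g n).
Definition computable2 (h : nat -> nat -> nat) : Prop :=
  exists c, forall a b, eval c [:: a; b] (h a b).

(*    A function (resp. relation) symbol is a pair (name, arity); the  *)
(*    language is given by boolean predicates fs, rs on such pairs.    *)
Inductive term : Type := Var (n : nat) | App (f : nat) (ts : seq term).

Inductive form : Type :=
| Eq (s t : term) | Rel (r : nat) (ts : seq term)
| Not (A : form) | And (A B : form) | Or (A B : form) | Imp (A B : form)
| All (n : nat) (A : form) | Ex (n : nat) (A : form).

Definition Zero : term := App 0 [::].
Definition Succ (t : term) : term := App 1 [:: t].
Definition num (n : nat) : term := iter n Succ Zero.

Fixpoint wf_term (fs : nat -> nat -> bool) (t : term) : bool :=
  match t with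
  | Var _ => true
  | App f ts => fs f (size ts) && all (wf_term fs) ts
  end.

Fixpoint wf_form (fs rs : nat -> nat -> bool) (A : form) : bool :=
  match A with
  | Eq s t => wf_term fs s && wf_term fs t
  | Rel r ts => rs r (size ts) && all (wf_term fs) ts
  | Not B => wf_form fs rs B
  | And B C | Or B C | Imp B C => wf_form fs rs B && wf_form fs rs C
  | All _ B | Ex _ B => wf_form fs rs B
  end.

Fixpoint occ_term (n : nat) (t : term) : bool :=
  match t with Var m => m == n | App _ ts => has (occ_term n) ts end.

Fixpoint free_in (n : nat) (A : form) : bool :=
  match A with
  | Eq s t => occ_term n s || occ_term n t
  | Rel _ ts => has (occ_term n) ts
  | Not B => free_in n B
  | And B C | Or B C | Imp B C => free_in n B || free_in n C
  | All m B | Ex m B => (m != n) && free_in n B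
  end.

Definition sentence (fs rs : nat -> nat -> bool) (A : form) : Prop :=
  wf_form fs rs A /\ forall n, ~~ free_in n A.

(* substitution of t for the free occurrences of variable v; it is only
   used with t closed or t a variable not occurring in the formula, so no
   capture can happen *)
Fixpoint tsubst (v : nat) (t : term) (u : term) : term :=
  match u with
  | Var m => if m == v then t else Var m
  | App f ts => App f (map (tsubst v t) ts)
  end.

Fixpoint subst (v : nat) (t : term) (A : form) : form :=
  match A with
  | Eq s u => Eq (tsubst v t s) (tsubst v t u)
  | Rel r ts => Rel r (map (tsubst v t) ts)
  | Not B => Not (subst v t B)
  | And B C => And (subst v t B) (subst v t C)
  | Or B C => Or (subst v t B) (subst v t C)
  | Imp B C => Imp (subst v t B) (subst v t C)
  | All m B => if m == v then All m B else All m (subst v t B)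
  | Ex m B => if m == v then Ex m B else Ex m (subst v t B)
  end.

Fixpoint tvarbound (t : term) : nat :=
  match t with Var m => m.+1 | App _ ts => foldr maxn 0 (map tvarbound ts) end.
Fixpoint varbound (A : form) : nat :=
  match A with
  | Eq s t => maxn (tvarbound s) (tvarbound t)
  | Rel _ ts => foldr maxn 0 (map tvarbound ts)
  | Not B => varbound B
  | And B C | Or B C | Imp B C => maxn (varbound B) (varbound C)
  | All m B | Ex m B => maxn m.+1 (varbound B)
  end.

(* exists! x_v . A  :=  exists x_v. (A /\ forall x_w. (A[x_v:=x_w] -> x_w = x_v)),
   with w fresh *)
Definition ExU (v : nat) (A : form) : form :=
  let w := maxn v.+1 (varbound A) in
  Ex v (And A (All w (Imp (subst v (Var w) A) (Eq (Var w) (Var v))))).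

Definition inst (vs : seq nat) (A : form) : form :=
  foldr (fun i B => subst i (num (nth 0 vs i)) B) A (iota 0 (size vs)).

Record structure : Type := Structure {
  dom : Type;
  dom_inh : dom;
  fint : nat -> seq dom -> dom;
  rint : nat -> seq dom -> Prop }.

Definition upd (D : Type) (e : nat -> D) (n : nat) (d : D) : nat -> D :=
  fun m => if m == n then d else e m.

Fixpoint teval (M : structure) (e : nat -> dom M) (t : term) : dom M :=
  match t with
  | Var m => e m
  | App f ts => @fint M f (map (@teval M e) ts)
  end.

Fixpoint sat (M : structure) (e : nat -> dom M) (A : form) {struct A} : Prop :=
  match A with
  | Eq s t => @teval M e s = @teval M e t
  | Rel r ts => @rint M r (map (@teval M e) ts)
  | Not B => ~ @sat M e B
  | And B C => @sat M e B /\ @sat M e C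
  | Or B C => @sat M e B \/ @sat M e C
  | Imp B C => @sat M e B -> @sat M e C
  | All m B => forall d, @sat M (upd e m d) B
  | Ex m B => exists d, @sat M (upd e m d) B
  end.

Definition entails (G : form -> Prop) (A : form) : Prop :=
  forall M : structure,
    (forall B, G B -> forall e, @sat M e B) -> forall e, @sat M e A.

Definition theory (fs rs : nat -> nat -> bool) (T : form -> Prop) : Prop :=
  (forall A, T A -> sentence fs rs A) /\
  (forall A, sentence fs rs A -> entails T A -> T A).

Definition consistent (T : form -> Prop) : Prop := ~ exists A, T A /\ T (Not A).

Inductive sym : Type :=
| sV | sF | sR | sI | sDot | sEq | sNot | sAnd | sOr | sImp | sAll | sEx.

Definition digit (c : sym) : nat :=
  match c with
  | sV => 1 | sF => 2 | sR => 3 | sI => 4 | sDot => 5 | sEq => 6 | sNot => 7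
  | sAnd => 8 | sOr => 9 | sImp => 10 | sAll => 11 | sEx => 12
  end.

(* the base: alphabet size + 1 (digit 0 is never used) *)
Definition kbase : nat := 13.

Definition rd (s : seq sym) : nat := foldl (fun acc c => acc * kbase + digit c) 0 s.

(* |x| : number of base-k digits of x (|0| = 0, the code of the empty string) *)
Fixpoint ndig_aux (fuel n : nat) : nat :=
  match fuel with
  | 0 => 0
  | fuel'.+1 => if n == 0 then 0 else (ndig_aux fuel' (n %/ kbase)).+1
  end.
Definition ndigits (n : nat) : nat := ndig_aux n n.

Definition unary (n : nat) : seq sym := rcons (nseq n sI) sDot.

Fixpoint ser_term (t : term) : seq sym :=
  match t with
  | Var m => sV :: unary m
  | App f ts => sF :: unary f ++ unary (size ts) ++ flatten (map ser_term ts)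
  end.

Fixpoint ser (A : form) : seq sym :=
  match A with
  | Eq s t => sEq :: ser_term s ++ ser_term t
  | Rel r ts => sR :: unary r ++ unary (size ts) ++ flatten (map ser_term ts)
  | Not B => sNot :: ser B
  | And B C => sAnd :: ser B ++ ser C
  | Or B C => sOr :: ser B ++ ser C
  | Imp B C => sImp :: ser B ++ ser C
  | All m B => sAll :: unary m ++ ser B
  | Ex m B => sEx :: unary m ++ ser B
  end.

Definition code (A : form) : nat := rd (ser A).

(* a list of strings is the string obtained by prefixing each item with its
   length (in unary); list concatenation is string concatenation *)
Definition enc (ls : seq (seq sym)) : seq sym :=
  flatten (map (fun s => unary (size s) ++ s) ls).

Definition axQ1 : form := All 0 (Not (Eq (Succ (Var 0)) Zero)).
Definition axQ2 : form :=
  All 0 (All 1 (Imp (Eq (Succ (Var 0)) (Succ (Var 1))) (Eq (Var 0) (Var 1)))).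
Definition axQ3 : form :=
  All 0 (Or (Eq (Var 0) Zero) (Ex 1 (Eq (Succ (Var 1)) (Var 0)))).

(* T represents every (partial) computable function: for the function of
   arity k computed by c, a formula <f>(x_0,...,x_(k-1), x_k) *)
Definition represents_all (fs rs : nat -> nat -> bool) (T : form -> Prop) : Prop :=
  T axQ1 /\ T axQ2 /\ T axQ3 /\
  forall (c : prog) (k : nat), exists phi : form,
    wf_form fs rs phi /\ (forall n, free_in n phi -> n <= k) /\
    forall (vs : seq nat) (y : nat), size vs = k -> eval c vs y ->
      T (And (ExU k (inst vs phi)) (subst k (num y) (inst vs phi))).

Definition thm (T : form -> Prop) (x : nat) : Prop := exists A, T A /\ code A = x.

(* pc p x = true stands for pc(p,x) = ✓, false for ✗ *)
Definition proof_verifier (T : form -> Prop) (pc : nat -> nat -> bool) : Prop :=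
  (forall A, T A -> exists p, pc p (code A)) /\
  (forall x, ~ thm T x -> forall p, pc p x = false).

Definition computable_pc (pc : nat -> nat -> bool) : Prop :=
  computable2 (fun p x => nat_of_bool (pc p x)).

Definition comp_enum (T : form -> Prop) : Prop :=
  exists pc, proof_verifier T pc /\ computable_pc pc.

Definition follows (Prem : form -> Prop) (B : form) : Prop :=
  (exists A C, Prem A /\ Prem C /\ B = And A C) \/
  (exists C, Prem (And B C) \/ Prem (And C B)) \/
  (exists A, Prem A /\ Prem (Imp A B)).

Definition canonical (T : form -> Prop) (pc : nat -> nat -> bool) : Prop :=
  proof_verifier T pc /\
  (forall p x, pc p x -> exists ls, p = rd (enc ls) /\
     forall s, In s ls -> thm T (rd s) \/ exists y, pc (rd s) y) /\
  (forall ls A B, pc (rd (enc ls)) (code A) ->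
     follows (fun C => In (ser C) ls) B ->
     pc (rd (enc (ls ++ [:: ser B]))) (code B)) /\
  (forall ls1 ls2 A B, pc (rd (enc ls1)) (code A) -> pc (rd (enc ls2)) (code B) ->
     pc (rd (enc (ls1 ++ ls2 ++ [:: ser (And A B)]))) (code (And A B))) /\
  (forall ls A B, pc (rd (enc ls)) (code (And A B)) ->
     pc (rd (enc (ls ++ [:: ser A]))) (code A) /\
     pc (rd (enc (ls ++ [:: ser B]))) (code B)).

Definition proof_problem (T : form -> Prop) (P : form -> Prop) : Prop :=
  forall A, P A -> T A.

Definition pc_decides (pc : nat -> nat -> bool) (p : nat) (A : form) : bool :=
  pc p (code A) || pc p (code (Not A)).

Definition min_proof_len (pc : nat -> nat -> bool) (A : form) (m : nat) : Prop :=
  (exists p, pc_decides pc p A /\ ndigits p = m) /\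
  (forall p, pc_decides pc p A -> m <= ndigits p).

Definition proof_complexity (pc : nat -> nat -> bool) (P : form -> Prop)
    (h : nat -> nat) : Prop :=
  forall n,
    (forall A m, P A -> ndigits (code A) <= n -> min_proof_len pc A m -> m <= h n) /\
    ((exists A, P A /\ ndigits (code A) <= n /\ min_proof_len pc A (h n)) \/
     ((forall A, P A -> n < ndigits (code A)) /\ h n = 0)).

Definition bigO (h g : nat -> nat) : Prop :=
  exists C N, forall n, N <= n -> h n <= C * g n.
Definition bigOmega (g h : nat -> nat) : Prop := bigO h g.
Definition littleo (f g : nat -> nat) : Prop :=
  forall C, exists N, forall n, N <= n -> C * f n <= g n.
Definition monotone (g : nat -> nat) : Prop := forall m n, m <= n -> g m <= g n.

From Stdlib Require List.
From Stdlib Require Import Classical ClassicalEpsilon.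
From mathcomp Require Import all_boot zify.
Set Implicit Arguments. Unset Strict Implicit. Unset Printing Implicit Defensive.

(* For every computable [B] the diagonal argument gives a theorem [H] all of whose
   proofs have more than [B |H|] digits.  The proof problem consists of the sentences
   [H /\ pad j] with [pad j] a tautology of size about [j] that has proofs of linear
   length, restricted to those where [H] has a proof of at most [g |H /\ pad j|]
   digits; joining such a proof with one of the pad gives the upper bound
   [g n + O(n) = O(g n)].  For the lower bound, pick [H] hard for
   [B a = g (a + c) + 4 a + 2], let [L] be the length of its shortest proof, and pad
   [H] to the least size [n] with [L <= g n].  Every proof of the padded sentence
   yields a proof of [H] only [2 |H| + 1] digits longer, so the complexity at [n] is
   at least [L - 2 |H| - 1], whereas [f n] is [o(g (n - 1))] and [g (n - 1) < L]. *)

(** * Base-13 codes *)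

Lemma digit_bounds c : 0 < digit c < 13.
Proof. by case: c. Qed.

Lemma digit_inj : injective digit.
Proof. by case; case. Qed.

Lemma rd_cat s t : rd (s ++ t) = rd s * 13 ^ size t + rd t.
Proof.
rewrite /rd foldl_cat; elim: t (foldl _ 0 s) => [|c t IH] a /=.
  by rewrite expn0 muln1 addn0.
by rewrite IH [in RHS]IH /kbase expnS; lia.
Qed.

Lemma rd_rcons s c : rd (rcons s c) = rd s * 13 + digit c.
Proof. by rewrite -cats1 rd_cat. Qed.

Lemma rd_lt s : rd s < 13 ^ size s.
Proof.
elim/last_ind: s => [|s c IH] //.
by rewrite rd_rcons size_rcons expnS; have := digit_bounds c; lia.
Qed.

Lemma rd_ge c s : 13 ^ size s <= rd (c :: s).
Proof.
elim/last_ind: s => [|s d IH]; first by rewrite /rd /=; have := digit_bounds c; lia.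
by rewrite -rcons_cons rd_rcons size_rcons expnS; lia.
Qed.

Lemma rd_inj : injective rd.
Proof.
elim/last_ind=> [|s c IH] t; case/lastP: t => [|t d] //; rewrite ?rd_rcons.
- by have := digit_bounds d; rewrite /rd /=; lia.
- by have := digit_bounds c; rewrite /rd /=; lia.
move=> E; have c_bounds := digit_bounds c; have d_bounds := digit_bounds d.
have Ecd : digit c = digit d.
  by have := congr1 (modn^~ 13) E; rewrite !modnMDl !modn_small //; lia.
by rewrite (IH t) ?(digit_inj Ecd) //; lia.
Qed.

Lemma ndigits_leq n b : (ndigits n <= b) = (n < 13 ^ b).
Proof.
suff fuel_enough fuel : forall n b, n <= fuel -> (ndig_aux fuel n <= b) = (n < 13 ^ b).
  exact: fuel_enough.
elim: fuel => [|fuel IH] m k /=.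
  by rewrite leqn0 => /eqP ->; rewrite expn_gt0.
have [->|m_gt0] := eqVneq m 0; first by rewrite expn_gt0.
case: k => [|k] Hm; first by rewrite expn0; lia.
rewrite ltnS IH /kbase ?ltn_divLR ?expnSr //.
by have := @ltn_Pdiv m 13 isT; rewrite lt0n m_gt0 => /(_ isT); lia.
Qed.

Lemma ndigits_monotone : {homo ndigits : m n / m <= n}.
Proof. by move=> m n mn; rewrite ndigits_leq (leq_ltn_trans mn) // -ndigits_leq. Qed.

Lemma ndigits_rd s : ndigits (rd s) = size s.
Proof.
apply/eqP; rewrite eqn_leq ndigits_leq rd_lt; case: s => [|c s] //=.
by rewrite ltnNge ndigits_leq -leqNgt rd_ge.
Qed.

Lemma size_unary n : size (unary n) = n.+1.
Proof. by rewrite /unary size_rcons size_nseq. Qed.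

Lemma enc_cat l1 l2 : enc (l1 ++ l2) = enc l1 ++ enc l2.
Proof. by rewrite /enc map_cat flatten_cat. Qed.

Lemma size_enc_cat l1 l2 : size (enc (l1 ++ l2)) = size (enc l1) + size (enc l2).
Proof. by rewrite enc_cat size_cat. Qed.

Lemma size_enc1 s : size (enc [:: s]) = (2 * size s).+1.
Proof. by rewrite /enc /= cats0 size_cat size_unary; lia. Qed.

(** * Unique readability *)

Definition term_ind' (P : term -> Prop) (HV : forall n, P (Var n))
  (HA : forall f ts, List.Forall P ts -> P (App f ts)) : forall t, P t :=
  fix F t := match t with
  | Var n => HV n
  | App f ts => HA f ts ((fix G ts := match ts return List.Forall P ts with
        | nil => List.Forall_nil P
        | cons t ts => List.Forall_cons t (F t) (G ts) end) ts)
  end.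

Lemma unary_cat_inj a b r r' : unary a ++ r = unary b ++ r' -> a = b /\ r = r'.
Proof.
rewrite /unary -!cats1 -!catA.
by elim: a b => [|a IH] [|b] //= [] => [|/IH [-> ->]].
Qed.

Lemma flatten_map_cat_inj (A : Type) (F : A -> seq sym) xs xs' r r' :
  List.Forall (fun x => forall x' r r', F x ++ r = F x' ++ r' -> x = x' /\ r = r') xs ->
  size xs = size xs' ->
  flatten (map F xs) ++ r = flatten (map F xs') ++ r' -> xs = xs' /\ r = r'.
Proof.
elim: xs xs' r r' => [|x xs IH] [|x' xs'] r r' // /List.Forall_cons_iff [Fx Fxs] [].
by rewrite /= -!catA => /(IH _ _ _ Fxs) Exs /Fx [-> /Exs [-> ->]].
Qed.

Lemma ser_term_cat_inj t t' r r' :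
  ser_term t ++ r = ser_term t' ++ r' -> t = t' /\ r = r'.
Proof.
elim/term_ind': t t' r r' => [n|f ts IH] [m|f' ts'] r r' //=.
  by case=> /unary_cat_inj [-> ->].
rewrite -!catA => -[] /unary_cat_inj [<-] /unary_cat_inj [].
by move=> /(flatten_map_cat_inj IH) Ets /Ets [-> ->].
Qed.

Lemma ser_cat_inj A B r r' : ser A ++ r = ser B ++ r' -> A = B /\ r = r'.
Proof.
have terms_inj ts ts' : size ts = size ts' -> forall r r',
    flatten (map ser_term ts) ++ r = flatten (map ser_term ts') ++ r' -> ts = ts' /\ r = r'.
  move=> Ets r1 r1'; apply: flatten_map_cat_inj Ets.
  by apply/List.Forall_forall => t _; apply: ser_term_cat_inj.
elim: A B r r' => [s t|q ts|A IH|A IHA C IHC|A IHA C IHC|A IHA C IHC|n A IH|n A IH]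
  [s' t'|q' ts'|B|B D|B D|B D|n' B|n' B] r r' //=; rewrite -?catA.
- by case=> /ser_term_cat_inj [->] /ser_term_cat_inj [-> ->].
- by case=> /unary_cat_inj [->] /unary_cat_inj [/terms_inj Ets /Ets [-> ->]].
- by case=> /IH [-> ->].
- by case=> /IHA [->] /IHC [-> ->].
- by case=> /IHA [->] /IHC [-> ->].
- by case=> /IHA [->] /IHC [-> ->].
- by case=> /unary_cat_inj [->] /IH [-> ->].
- by case=> /unary_cat_inj [->] /IH [-> ->].
Qed.

Lemma code_inj : injective code.
Proof. by move=> A B /rd_inj E; have [] := @ser_cat_inj A B [::] [::]; rewrite ?cats0. Qed.

(** * Semantics of substitution *)

Lemma upd_comm (D : Type) (rho : nat -> D) a b da db : a != b ->
  upd (upd rho a da) b db =1 upd (upd rho b db) a da.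
Proof.
move=> ab m; rewrite /upd; case: (eqVneq m b) => [->|//].
by rewrite eq_sym (negbTE ab).
Qed.

Lemma upd_upd (D : Type) (rho : nat -> D) a d d' : upd (upd rho a d) a d' =1 upd rho a d'.
Proof. by move=> m; rewrite /upd; case: eqP. Qed.

Section Semantics.
Variable M : structure.
Implicit Types (rho : nat -> dom M).

Lemma tvarbound_le t ts : List.In t ts -> tvarbound t <= foldr maxn 0 (map tvarbound ts).
Proof.
elim: ts => [|u ts IH] //= [->|/IH H]; first exact: leq_maxl.
exact: leq_trans H (leq_maxr _ _).
Qed.

Lemma teval_ext t rho rho' : (forall m, m < tvarbound t -> rho m = rho' m) ->
  teval rho t = teval rho' t.
Proof.
elim/term_ind': t rho rho' => [n|f ts IH] rho rho' E /=; first exact: E.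
congr (fint _ _); apply: List.map_ext_in => u u_ts.
have /List.Forall_forall IHu := IH; apply: IHu => // m m_lt.
exact/E/(leq_trans m_lt (tvarbound_le u_ts)).
Qed.

Lemma teval_upd_notin m d t rho : ~~ occ_term m t -> teval (upd rho m d) t = teval rho t.
Proof.
elim/term_ind': t => [n|f ts IH] /=; first by rewrite /upd eq_sym => /negbTE ->.
move=> ts_m; congr (fint _ _).
elim: ts IH ts_m => [|u ts IHts] //= /List.Forall_cons_iff [IHu IH].
by rewrite negb_or => /andP [/IHu -> /(IHts IH) ->].
Qed.

Lemma sat_ext A rho rho' : (forall m, m < varbound A -> rho m = rho' m) ->
  sat rho A <-> sat rho' A.
Proof.
elim: A rho rho' => [s t|q ts|A IH|A IHA C IHC|A IHA C IHC|A IHA C IHC|n A IH|n A IH]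
  rho rho' E /=;
  try have [E1 E2] : (forall m, m < varbound A -> rho m = rho' m) /\
                     (forall m, m < varbound C -> rho m = rho' m)
    by split=> m m_lt; apply: E; rewrite /= leq_max m_lt ?orbT.
- by rewrite !(teval_ext (rho' := rho')) // => m m_lt; apply: E; rewrite /= leq_max m_lt ?orbT.
- suff -> : map (teval rho) ts = map (teval rho') ts by [].
  apply: List.map_ext_in => u u_ts; apply: teval_ext => m m_lt.
  exact/E/(leq_trans m_lt (tvarbound_le u_ts)).
- by rewrite (IH _ rho').
- by rewrite (IHA _ rho') // (IHC _ rho').
- by rewrite (IHA _ rho') // (IHC _ rho').
- by rewrite (IHA _ rho') // (IHC _ rho').
- have Ed d : sat (upd rho n d) A <-> sat (upd rho' n d) A.
    apply: IH => m m_lt; rewrite /upd; case: eqP => // _.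
    by apply: E; rewrite /= leq_max m_lt orbT.
  by split=> K d; apply/Ed.
- have Ed d : sat (upd rho n d) A <-> sat (upd rho' n d) A.
    apply: IH => m m_lt; rewrite /upd; case: eqP => // _.
    by apply: E; rewrite /= leq_max m_lt orbT.
  by split=> -[d /Ed K]; exists d.
Qed.

Lemma sat_eq_env A rho rho' : rho =1 rho' -> sat rho A <-> sat rho' A.
Proof. by move=> E; apply: sat_ext => m _. Qed.

Lemma teval_tsubst v t u rho :
  teval rho (tsubst v t u) = teval (upd rho v (teval rho t)) u.
Proof.
elim/term_ind': u => [n|f ts IH] /=; first by rewrite /upd; case: eqP.
congr (fint _ _); rewrite -map_comp.
by elim: ts IH => [|u ts IHts] //= /List.Forall_cons_iff [-> /IHts ->].
Qed.

(* [subst] does not rename, so [t] must avoid the variables of [A]. *)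
Lemma sat_subst A v t rho : (forall m, m < varbound A -> ~~ occ_term m t) ->
  sat rho (subst v t A) <-> sat (upd rho v (teval rho t)) A.
Proof.
elim: A rho => [s u|q ts|A IH|A IHA C IHC|A IHA C IHC|A IHA C IHC|n A IH|n A IH]
  rho t_free /=;
  try have [FA FC] : (forall m, m < varbound A -> ~~ occ_term m t) /\
                     (forall m, m < varbound C -> ~~ occ_term m t)
    by split=> m m_lt; apply: t_free; rewrite /= leq_max m_lt ?orbT.
- by rewrite !teval_tsubst.
- by rewrite -map_comp; under eq_map => u do rewrite /= teval_tsubst.
- by rewrite IH.
- by rewrite IHA // IHC.
- by rewrite IHA // IHC.
- by rewrite IHA // IHC.
- have body d : sat (upd rho n d) (if n == v then A else subst v t A) <->
                sat (upd (upd rho v (teval rho t)) n d) A.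
    case: eqVneq => [->|nv]; first by apply/sat_eq_env => m; rewrite upd_upd.
    have n_free : ~~ occ_term n t by apply: t_free; rewrite /= leq_max ltnSn.
    rewrite IH ?teval_upd_notin //; first exact/sat_eq_env/upd_comm.
    by move=> m m_lt; apply: t_free; rewrite /= leq_max m_lt orbT.
  by case: eqP body => _ body; split=> K d; apply/body.
- have body d : sat (upd rho n d) (if n == v then A else subst v t A) <->
                sat (upd (upd rho v (teval rho t)) n d) A.
    case: eqVneq => [->|nv]; first by apply/sat_eq_env => m; rewrite upd_upd.
    have n_free : ~~ occ_term n t by apply: t_free; rewrite /= leq_max ltnSn.
    rewrite IH ?teval_upd_notin //; first exact/sat_eq_env/upd_comm.
    by move=> m m_lt; apply: t_free; rewrite /= leq_max m_lt orbT.
  by case: eqP body => _ body; split=> -[d /body K]; exists d.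
Qed.

Lemma occ_num m y : occ_term m (num y) = false.
Proof. by elim: y => //= y ->. Qed.

Lemma sat_subst_num A v y rho :
  sat rho (subst v (num y) A) <-> sat (upd rho v (teval rho (num y))) A.
Proof. by apply: sat_subst => m _; rewrite occ_num. Qed.

Lemma sat_ExU k A rho : sat rho (ExU k A) ->
  exists d, sat (upd rho k d) A /\ forall d', sat (upd rho k d') A -> d' = d.
Proof.
rewrite /ExU /=; set w := maxn k.+1 (varbound A).
have [A_w k_w] : varbound A <= w /\ k < w by rewrite leq_maxr leq_maxl.
move=> [d [Ad uniq]]; exists d; split => // d' Ad'.
have := uniq d'; rewrite /= sat_subst; last first.
  by move=> m m_lt /=; apply/eqP; lia.
have Ew : upd (upd rho k d) w d' w = d' by rewrite /upd eqxx.
have Ek : upd (upd rho k d) w d' k = d.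
  by rewrite /upd (_ : k == w = false) ?eqxx //; apply/eqP; lia.
rewrite /= Ew Ek; apply; apply/(sat_ext (rho := upd rho k d')) => // m m_lt.
by rewrite /upd; case: (m =P k) => // _; rewrite (_ : m == w = false) //; apply/eqP; lia.
Qed.

Lemma sat_represents k A y rho : sat rho (And (ExU k A) (subst k (num y) A)) ->
  forall a, sat (upd rho k a) A <-> a = teval rho (num y).
Proof.
move=> [/sat_ExU [d [Ad uniq]] /sat_subst_num Ay] a.
by split=> [/uniq ->|->]; first exact/esym/uniq.
Qed.
End Semantics.

Section Syntax.
Variables fs rs : nat -> nat -> bool.

Lemma wf_num y : fs 0 0 -> fs 1 1 -> wf_term fs (num y).
Proof. by move=> fs0 fs1; elim: y => [|y IH] /=; rewrite ?fs0 ?fs1 ?IH. Qed.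

Lemma wf_tsubst v t u : wf_term fs t -> wf_term fs u -> wf_term fs (tsubst v t u).
Proof.
move=> wf_t; elim/term_ind': u => [n|f ts IH] /=; first by case: eqP.
rewrite size_map => /andP [-> wf_ts] /=.
by elim: ts IH wf_ts => [|u ts IHts] //= /List.Forall_cons_iff [IHu /IHts IH] /andP [/IHu -> /IH].
Qed.

Lemma wf_subst v t A : wf_term fs t -> wf_form fs rs A -> wf_form fs rs (subst v t A).
Proof.
move=> wf_t; elim: A => [s u|q ts|A IH|A IHA C IHC|A IHA C IHC|A IHA C IHC|n A IH|n A IH] /=.
- by case/andP=> wf_s wf_u; rewrite !wf_tsubst.
- rewrite size_map => /andP [-> /=]; elim: ts => [|u ts IHts] //=.
  by case/andP=> /(wf_tsubst v wf_t) -> /IHts.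
- exact: IH.
all: try by case/andP=> /IHA -> /IHC.
all: by case: eqP => _ //= /IH.
Qed.
End Syntax.

Lemma occ_tsubst n v t u : (forall m, occ_term m t = false) ->
  occ_term n (tsubst v t u) -> occ_term n u && (n != v).
Proof.
move=> t_closed; elim/term_ind': u => [m|f ts IH] /=.
  by case: eqP => [->|mv]; [rewrite t_closed | move=> /eqP <-; rewrite eqxx; apply/eqP].
elim: ts IH => [|u ts IHts] //= /List.Forall_cons_iff [IHu /IHts IH].
by case/orP => [/IHu|/IH] /andP [-> ->]; rewrite ?orbT.
Qed.

Lemma free_in_subst n v t A : (forall m, occ_term m t = false) ->
  free_in n (subst v t A) -> free_in n A && (n != v).
Proof.
move=> t_closed; elim: A => [s u|q ts|A IH|A IHA C IHC|A IHA C IHC|A IHA C IHC|m A IH|m A IH] /=.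
- by case/orP => /(occ_tsubst t_closed) /andP [-> ->]; rewrite ?orbT.
- elim: ts => [|u ts IHts] //=.
  by case/orP => [/(occ_tsubst t_closed)|/IHts] /andP [-> ->]; rewrite ?orbT.
- exact: IH.
all: try by case/orP => [/IHA|/IHC] /andP [-> ->]; rewrite ?orbT.
all: case: (m =P v) => [->|_] /= /andP [mn free_A].
1,3: by rewrite mn free_A eq_sym.
all: by move: free_A => /IH /andP [-> ->]; rewrite mn.
Qed.

(** * Computable functions *)

Definition computes (c : prog) (k : nat) (F : seq nat -> nat) : Prop :=
  forall v, size v = k -> eval c v (F v).

Lemma computes_ext c k F G : computes c k F ->
  (forall v, size v = k -> F v = G v) -> computes c k G.
Proof. by move=> cF FG v v_k; rewrite -FG //; apply: cF. Qed.

Lemma computes_proj i k : i < k -> computes (pProj i) k (fun v => nth 0 v i).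
Proof. by move=> ik v v_k; apply: eProj; rewrite v_k. Qed.

Lemma computes_succ : computes pSucc 1 (fun v => (nth 0 v 0).+1).
Proof. by case=> [|x [|]] //= _; apply: eSucc. Qed.

Lemma computes_comp1 c F g G k : computes c 1 F -> computes g k G ->
  computes (pComp c [:: g]) k (fun v => F [:: G v]).
Proof.
move=> cF gG v v_k; apply: (eComp (ys := [:: G v])); last exact: cF.
by apply: esCons; [apply: gG|apply: esNil].
Qed.

Lemma computes_comp2 c F g1 G1 g2 G2 k :
  computes c 2 F -> computes g1 k G1 -> computes g2 k G2 ->
  computes (pComp c [:: g1; g2]) k (fun v => F [:: G1 v; G2 v]).
Proof.
move=> cF g1G1 g2G2 v v_k; apply: (eComp (ys := [:: G1 v; G2 v])); last exact: cF.
by apply: esCons; [apply: g1G1|apply: esCons; [apply: g2G2|apply: esNil]].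
Qed.

Fixpoint primrec (F G : seq nat -> nat) (n : nat) (w : seq nat) : nat :=
  if n is n'.+1 then G [:: n', primrec F G n' w & w] else F w.

Lemma computes_prec f F g G k : computes f k F -> computes g k.+2 G ->
  computes (pPrec f g) k.+1 (fun v => primrec F G (head 0 v) (behead v)).
Proof.
move=> fF gG [|n w] //= [w_k].
elim: n => [|n IH] /=; first exact/ePrec0/fF.
by apply: (ePrecS IH); apply: gG; rewrite /= w_k.
Qed.

Lemma eval_min f F k v y : computes f k.+1 F -> size v = k ->
  F (y :: v) = 0 -> (forall z, z < y -> 0 < F (z :: v)) -> eval (pMin f) v y.
Proof.
move=> fF v_k Fy Fz; apply: eMin; first by rewrite -Fy; apply: fF; rewrite /= v_k.
move=> z /Fz; case E: (F (z :: v)) => [|r] // _; exists r.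
by rewrite -E; apply: fF; rewrite /= v_k.
Qed.

Fixpoint pconst (n : nat) : prog :=
  if n is n'.+1 then pComp pSucc [:: pconst n'] else pZero.

Lemma computes_const n k : computes (pconst n) k (fun _ => n).
Proof.
elim: n => [|n IH] v v_k /=; first exact: eZero.
exact: (computes_comp1 computes_succ IH).
Qed.

Definition padd : prog := pPrec (pProj 0) (pComp pSucc [:: pProj 1]).

Lemma computes_add : computes padd 2 (fun v => nth 0 v 0 + nth 0 v 1).
Proof.
apply: computes_ext (computes_prec (computes_proj (k := 1) (i := 0) isT)
  (computes_comp1 computes_succ (computes_proj (k := 3) (i := 1) isT))) _.
by case=> [|a [|b [|]]] //= _; elim: a => //= a ->.
Qed.

Definition pmul : prog := pPrec (pconst 0) (pComp padd [:: pProj 1; pProj 2]).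

Lemma computes_mul : computes pmul 2 (fun v => nth 0 v 0 * nth 0 v 1).
Proof.
apply: computes_ext (computes_prec (computes_const 0 (k := 1))
  (computes_comp2 computes_add (computes_proj (k := 3) (i := 1) isT)
     (computes_proj (k := 3) (i := 2) isT))) _.
by case=> [|a [|b [|]]] //= _; elim: a => //= a ->; rewrite mulSn addnC.
Qed.

Definition pexp (b : nat) : prog := pPrec (pconst 1) (pComp pmul [:: pProj 1; pconst b]).

Lemma computes_exp b : computes (pexp b) 1 (fun v => b ^ nth 0 v 0).
Proof.
apply: computes_ext (computes_prec (computes_const 1 (k := 0))
  (computes_comp2 computes_mul (computes_proj (k := 2) (i := 1) isT)
     (computes_const b (k := 2)))) _.
by case=> [|a [|]] //= _; elim: a => //= a ->; rewrite expnSr.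
Qed.

Definition ppred : prog := pPrec (pconst 0) (pProj 0).

Lemma computes_pred : computes ppred 1 (fun v => (nth 0 v 0).-1).
Proof.
apply: computes_ext (computes_prec (computes_const 0 (k := 0))
  (computes_proj (k := 2) (i := 0) isT)) _.
by case=> [|[|a] [|]].
Qed.

Definition psub : prog :=
  pComp (pPrec (pProj 0) (pComp ppred [:: pProj 1])) [:: pProj 1; pProj 0].

Lemma computes_sub : computes psub 2 (fun v => nth 0 v 0 - nth 0 v 1).
Proof.
have rsub : computes (pPrec (pProj 0) (pComp ppred [:: pProj 1])) 2
              (fun v => nth 0 v 1 - nth 0 v 0).
  apply: computes_ext (computes_prec (computes_proj (k := 1) (i := 0) isT)
    (computes_comp1 computes_pred (computes_proj (k := 3) (i := 1) isT))) _.
  by case=> [|b [|a [|]]] //= _; elim: b => [|b /= ->]; rewrite ?subn0 ?subnS.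
apply: computes_ext (computes_comp2 rsub (computes_proj (k := 2) (i := 1) isT)
  (computes_proj (k := 2) (i := 0) isT)) _.
by case=> [|a [|b [|]]].
Qed.

(* [1 - (a - b)] is the truth value of [a <= b]. *)
Definition pleq : prog := pComp psub [:: pconst 1; psub].

Lemma computes_leq : computes pleq 2 (fun v => nth 0 v 0 <= nth 0 v 1).
Proof.
apply: computes_ext (computes_comp2 computes_sub (computes_const 1 (k := 2)) computes_sub) _.
by case=> [|a [|b [|]]] //= _; rewrite -subn_eq0; case: (a - b).
Qed.

Definition phorner (p : prog) (c : sym) : prog :=
  pComp padd [:: pComp pmul [:: p; pconst 13]; pconst (digit c)].

(* Horner evaluation keeps the program small although [rd s] is huge. *)
Definition prd (s : seq sym) : prog := foldl phorner pZero s.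

Lemma computes_rd s k : computes (prd s) k (fun _ => rd s).
Proof.
rewrite /prd /rd; have : computes pZero k (fun _ => 0) by move=> v _; apply: eZero.
elim: s pZero 0 => [|c s IH] p a //= pa; apply: IH.
exact: computes_comp2 computes_add (computes_comp2 computes_mul pa
  (computes_const 13 (k := k))) (computes_const (digit c) (k := k)).
Qed.

Definition pndigits : prog := pMin (pComp pleq [:: pComp (pexp 13) [:: pProj 0]; pProj 1]).

Lemma computes_ndigits : computes pndigits 1 (fun v => ndigits (nth 0 v 0)).
Proof.
have c13 := computes_comp2 computes_leq (computes_comp1 (computes_exp 13)
  (computes_proj (k := 2) (i := 0) isT)) (computes_proj (k := 2) (i := 1) isT).
case=> [|x [|]] //= _; apply: (eval_min c13) => //=.
  by rewrite leqNgt -ndigits_leq leqnn.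
by move=> z z_lt; rewrite lt0b leqNgt -ndigits_leq -ltnNge.
Qed.

Definition pbexists (c : prog) : prog :=
  pPrec (pconst 0)
    (pComp pleq [:: pconst 1; pComp padd [:: pProj 1; pComp c [:: pProj 0; pProj 2]]]).

Lemma computes_bexists c F : computes c 2 F ->
  computes (pbexists c) 2
    (fun v => has (fun i => 0 < F [:: i; nth 0 v 1]) (iota 0 (nth 0 v 0))).
Proof.
move=> cF; apply: computes_ext (computes_prec (computes_const 0 (k := 1))
  (computes_comp2 computes_leq (computes_const 1 (k := 3))
    (computes_comp2 computes_add (computes_proj (k := 3) (i := 1) isT)
       (computes_comp2 cF (computes_proj (k := 3) (i := 0) isT)
          (computes_proj (k := 3) (i := 2) isT))))) _.
case=> [|n [|y [|]]] //= _; elim: n => // n IHn.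
have -> : iota 0 n.+1 = rcons (iota 0 n) n by rewrite -cats1 -addn1 iotaD.
by rewrite /= IHn -cats1 has_cat /= orbF addn_gt0 lt0b.
Qed.

Definition paffine (a b : nat) : prog :=
  pComp padd [:: pComp pmul [:: pconst a; pProj 0]; pconst b].

Lemma computes_affine a b k : 0 < k ->
  computes (paffine a b) k (fun v => a * nth 0 v 0 + b).
Proof.
move=> k_gt0; exact: computes_comp2 computes_add (computes_comp2 computes_mul
  (computes_const a (k := k)) (computes_proj k_gt0)) (computes_const b (k := k)).
Qed.

Lemma computable1_shift g c a b : computable1 g ->
  computable1 (fun n => g (n + c) + (a * n + b)).
Proof.
move=> [cg cgE]; have c_g : computes cg 1 (fun v => g (nth 0 v 0)).
  by case=> [|x [|]] //= _; apply: cgE.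
have := computes_comp2 computes_add (computes_comp1 c_g (computes_affine 1 c (k := 1) isT))
  (computes_affine a b (k := 1) isT).
by move=> c_shift; eexists => n; move: (c_shift [:: n] erefl); rewrite /= mul1n; apply.
Qed.

(** * The diagonal sentence *)

(* [let0 n X] says [X(n)]; unlike [subst 0 (num n) X], its code is the simple
   arithmetic function [diag_code] of [n] and [code X]. *)
Definition let0 (n : nat) (X : form) : form := Ex 0 (And (Eq (Var 0) (num n)) X).

Definition let0_prefix : seq sym := [:: sEx; sDot; sAnd; sEq; sV; sDot].

Definition diag_code (x : nat) : nat :=
  rd (let0_prefix ++ ser_term (num x)) * 13 ^ ndigits x + x.

Lemma code_let0 X : code (let0 (code X) X) = diag_code (code X).
Proof. by rewrite /diag_code {2}/code ndigits_rd -rd_cat -catA. Qed.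

Definition succ_prefix : seq sym := [:: sF; sI; sDot; sI; sDot].

Lemma ser_term_num_succ x : ser_term (num x.+1) = succ_prefix ++ ser_term (num x).
Proof. by rewrite /= cats0. Qed.

Lemma size_ser_term_num x : size (ser_term (num x)) = 5 * x + 3.
Proof. by elim: x => [|x IH] //; rewrite ser_term_num_succ size_cat IH /=; lia. Qed.

Definition pnumcode : prog :=
  pPrec (prd (ser_term Zero))
    (pComp padd [:: pComp pmul [:: prd succ_prefix; pComp (pexp 13) [:: paffine 5 3]];
                    pProj 1]).

Lemma computes_numcode : computes pnumcode 1 (fun v => rd (ser_term (num (nth 0 v 0)))).
Proof.
apply: computes_ext (computes_prec (computes_rd _ (k := 0))
  (computes_comp2 computes_add (computes_comp2 computes_mul (computes_rd _ (k := 2))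
     (computes_comp1 (computes_exp 13) (computes_affine 5 3 (k := 2) isT)))
     (computes_proj (k := 2) (i := 1) isT))) _.
case=> [|x [|]] //= _; elim: x => [|x IH] //.
by rewrite [in RHS]ser_term_num_succ rd_cat size_ser_term_num -IH.
Qed.

Definition pdiag_code : prog :=
  pComp padd [:: pComp pmul [:: pComp padd [:: pComp pmul [:: prd let0_prefix;
                                                   pComp (pexp 13) [:: paffine 5 3]];
                                               pnumcode];
                               pComp (pexp 13) [:: pndigits]];
                 pProj 0].

Lemma computes_diag_code : computes pdiag_code 1 (fun v => diag_code (nth 0 v 0)).
Proof.
(* generalizing the prefix keeps tactics from evaluating its large code *)
rewrite /pdiag_code /diag_code; move: let0_prefix => s.
apply: computes_ext (computes_comp2 computes_add (computes_comp2 computes_mul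
  (computes_comp2 computes_add (computes_comp2 computes_mul (computes_rd s (k := 1))
     (computes_comp1 (computes_exp 13) (computes_affine 5 3 (k := 1) isT))) computes_numcode)
  (computes_comp1 (computes_exp 13) computes_ndigits)) (computes_proj (k := 1) (i := 0) isT)) _.
by case=> [|x [|]] //= _; rewrite rd_cat size_ser_term_num.
Qed.

Definition diag (pc : nat -> nat -> bool) (B : nat -> nat) (x : nat) : bool :=
  has (fun p => pc p (diag_code x)) (iota 0 (13 ^ B (ndigits (diag_code x)))).

Lemma computable_diag pc B : computable_pc pc -> computable1 B ->
  computable1 (fun x => diag pc B x).
Proof.
move=> [cpc cpcE] [cB cBE].
have c_pc : computes cpc 2 (fun v => pc (nth 0 v 0) (nth 0 v 1)).
  by case=> [|a [|b [|]]] //= _; apply: cpcE.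
have c_B : computes cB 1 (fun v => B (nth 0 v 0)) by case=> [|a [|]] //= _; apply: cBE.
have := computes_comp2 (computes_bexists c_pc)
  (computes_comp1 (computes_exp 13) (computes_comp1 c_B
     (computes_comp1 computes_ndigits computes_diag_code))) computes_diag_code.
move=> /computes_ext c_diag; eexists => x.
apply: (c_diag (fun v => nat_of_bool (diag pc B (nth 0 v 0)))) => //.
by case=> [|y [|]] //= _; rewrite /diag; under eq_has => p do rewrite lt0b.
Qed.

Lemma teval_num (M : structure) (rho : nat -> dom M) m d y :
  teval (upd rho m d) (num y) = teval rho (num y).
Proof. by rewrite teval_upd_notin ?occ_num. Qed.

Lemma sat_let0 (M : structure) (rho : nat -> dom M) n X :
  sat rho (let0 n X) <-> sat (upd rho 0 (teval rho (num n))) X.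
Proof.
have pinned d : upd rho 0 d 0 = teval (upd rho 0 d) (num n) <-> d = teval rho (num n).
  by rewrite teval_num {1}/upd eqxx.
split=> [[d [/= /pinned -> //]] | X_n].
by exists (teval rho (num n)); split=> //; apply/pinned.
Qed.

Definition model (T : form -> Prop) (M : structure) : Prop :=
  forall A, T A -> forall rho, @sat M rho A.

Section Theories.
Variables (fs rs : nat -> nat -> bool) (T : form -> Prop).
Hypothesis T_theory : theory fs rs T.

Lemma theory_valid A : sentence fs rs A ->
  (forall M, model T M -> forall rho, @sat M rho A) -> T A.
Proof. by move=> A_sentence A_valid; apply: T_theory.2 => // M; apply: A_valid. Qed.

Lemma theory_and A C : T A -> T C -> T (And A C).
Proof.
move=> TA TC; have [[wf_A A_closed] [wf_C C_closed]] := (T_theory.1 _ TA, T_theory.1 _ TC).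
apply: theory_valid => [|M M_T rho]; last by split; apply: M_T.
by split=> [|n]; rewrite /= ?wf_A ?wf_C ?negb_or ?A_closed ?C_closed.
Qed.

Hypothesis T_consistent : consistent T.

Lemma theory_satisfiable A : T A -> ~ forall M, model T M -> forall rho, ~ @sat M rho A.
Proof.
move=> TA A_unsat; apply: T_consistent; exists A; split=> //.
have [wf_A A_closed] := T_theory.1 _ TA.
by apply: theory_valid => [|M M_T rho]; [split | apply: A_unsat].
Qed.

Lemma theorem_not_refuted A : T A -> ~ thm T (code (Not A)).
Proof. by move=> TA [NA [TNA /code_inj E]]; apply: T_consistent; exists A; rewrite -E. Qed.

Lemma theorem_decidable pc A : proof_verifier T pc -> T A -> exists p, pc_decides pc p A.
Proof. by move=> [pc_complete _] /pc_complete [p pc_p]; exists p; rewrite /pc_decides pc_p. Qed.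

Lemma thm_code A : thm T (code A) -> T A.
Proof. by move=> [A' [TA' /code_inj <-]]. Qed.

Lemma verifier_sound pc p x : proof_verifier T pc -> pc p x -> thm T x.
Proof. by move=> [_ pc_thm] pcx; apply: NNPP => /pc_thm /(_ p); rewrite pcx. Qed.

Lemma decides_theorem pc p A : proof_verifier T pc -> T A ->
  pc_decides pc p A -> pc p (code A).
Proof.
move=> [_ pc_sound] TA /orP [//|pc_not].
by have := pc_sound _ (theorem_not_refuted TA) p; rewrite pc_not.
Qed.
End Theories.

Section Diagonal.
Variables (fs rs : nat -> nat -> bool) (T : form -> Prop) (pc : nat -> nat -> bool).
Variable B : nat -> nat.
Hypotheses (fs0 : fs 0 0) (fs1 : fs 1 1).
Hypotheses (T_theory : theory fs rs T) (T_consistent : consistent T).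
Hypothesis T_represents : represents_all fs rs T.
Hypotheses (pc_verifier : proof_verifier T pc) (pc_computable : computable_pc pc).
Hypothesis B_computable : computable1 B.

(* Goedel's diagonal argument: the sentence sigma says "[diag pc B (code X)] is
   false", i.e. "I have no proof with fewer than [B |sigma|] digits". *)
Theorem theorem_without_short_proof :
  exists H, T H /\ forall p, pc p (code H) -> B (ndigits (code H)) < ndigits p.
Proof.
have [c c_diag] := computable_diag pc_computable B_computable.
have [Q1 [_ [_ /(_ c 1) [phi [wf_phi [free_phi rep_phi]]]]]] := T_represents.
set X := subst 1 (num 0) phi; set e := code X; set sigma := let0 e X.
have rep_e := rep_phi [:: e] _ erefl (c_diag e); rewrite /inst /= in rep_e.
have {rep_e} sat_sigma M : model T M -> forall rho : nat -> dom M,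
    sat rho sigma <-> teval rho Zero = teval rho (num (diag pc B e)).
  move=> M_T rho; rewrite sat_let0 /X sat_subst_num teval_num.
  rewrite -(sat_represents (M_T _ rep_e rho)) sat_subst_num teval_num.
  exact/sat_eq_env/upd_comm.
have sentence_sigma : sentence fs rs sigma.
  split=> [|n]; rewrite /sigma /let0 /X /=; first by rewrite wf_num ?wf_subst //= fs0.
  rewrite occ_num /=; case: eqVneq => [<-|n0] //=.
  apply/negP => /(free_in_subst (fun m => occ_num m 0)) /andP [/free_phi].
  by case: n n0 => [|[|n]].
have code_sigma : code sigma = diag_code e by rewrite code_let0.
case Ey: (diag pc B e) sat_sigma => sat_sigma.
- exfalso; move: Ey; rewrite /diag -code_sigma => /hasP [p _ /(verifier_sound pc_verifier)].
  move=> /(thm_code (T := T)) T_sigma; apply: (theory_satisfiable T_theory T_consistent Q1).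
  move=> M M_T rho; have /(sat_sigma M M_T) /= zero_one := M_T _ T_sigma rho.
  by move=> /(_ (teval rho Zero)); rewrite /= {1}/upd eqxx -zero_one.
- exists sigma; split=> [|p pc_p].
    by apply: (theory_valid T_theory sentence_sigma) => M M_T rho; rewrite sat_sigma.
  rewrite ltnNge ndigits_leq; apply/negP => p_short; move/negbT: Ey.
  by rewrite /diag -code_sigma => /hasPn /(_ p); rewrite mem_iota p_short pc_p => /(_ isT).
Qed.
End Diagonal.

(** * Padding *)

Definition taut (v : nat) : form := All v (Eq Zero Zero).

(* [pad t] is a balanced conjunction of tautologies with [|pad t| = max t 9];
   balancing is what makes its proofs linear in [t]. *)
Fixpoint pad_rec (fuel t : nat) : form :=
  if fuel is fuel'.+1 then
    if t < 20 then taut (t - 9)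
    else And (pad_rec fuel' (t.-1)./2) (pad_rec fuel' (t.-1 - (t.-1)./2))
  else taut 0.

Definition pad (t : nat) : form := pad_rec t t.

Lemma pad_rec_fuel fuel fuel' t : t <= fuel -> t <= fuel' -> pad_rec fuel t = pad_rec fuel' t.
Proof.
elim: fuel fuel' t => [|fuel IH] [|fuel'] [|t] //= t_le t_le'; case: ifP => // _.
by congr And; apply: IH; lia.
Qed.

Lemma padE t : pad t =
  if t < 20 then taut (t - 9) else And (pad (t.-1)./2) (pad (t.-1 - (t.-1)./2)).
Proof.
by case: t => [|t] //; rewrite /pad /=; case: ifP => // _; congr And; apply: pad_rec_fuel; lia.
Qed.

Lemma size_pad t : size (ser (pad t)) = maxn t 9.
Proof.
elim/ltn_ind: t => t IH; rewrite padE; case: ifP => t_lt.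
  by rewrite /= size_cat size_unary /=; lia.
by rewrite /= size_cat !IH; lia.
Qed.

Lemma sentence_pad (fs rs : nat -> nat -> bool) t : fs 0 0 -> sentence fs rs (pad t).
Proof.
move=> fs0; elim/ltn_ind: t => t IH; rewrite padE; case: ifP => t_lt.
  by split=> [|n] /=; rewrite ?fs0 ?andbF.
have [wf1 closed1] := IH (t.-1)./2 ltac:(lia).
have [wf2 closed2] := IH (t.-1 - (t.-1)./2) ltac:(lia).
by split=> [|n] /=; rewrite ?wf1 ?wf2 ?negb_or ?closed1 ?closed2.
Qed.

Lemma sat_pad (M : structure) (rho : nat -> dom M) t : sat rho (pad t).
Proof.
elim/ltn_ind: t rho => t IH rho; rewrite padE; case: ifP => t_lt //.
by split; apply: IH; lia.
Qed.

Lemma finite_uniform_bound N (P : nat -> nat -> Prop) :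
  (forall t c c', P t c -> c <= c' -> P t c') ->
  (forall t, t < N -> exists c, P t c) -> exists K, forall t, t < N -> P t K.
Proof.
move=> P_mono; elim: N => [|N IH] P_ex; first by exists 0.
have [K PK] := IH (fun t t_lt => P_ex t (ltnW t_lt)).
have [c Pc] := P_ex N (ltnSn N).
exists (maxn K c) => t; rewrite ltnS leq_eqVlt => /orP [/eqP ->|t_lt].
  exact: P_mono Pc (leq_maxr _ _).
exact: P_mono (PK t t_lt) (leq_maxl _ _).
Qed.

Section CanonicalProofs.
Variables (T : form -> Prop) (pc : nat -> nat -> bool).
Hypothesis pc_canonical : canonical T pc.

Lemma proof_enc p x : pc p x -> exists ls, p = rd (enc ls).
Proof. by case: pc_canonical => _ [enc_proofs _] /enc_proofs [ls [-> _]]; exists ls. Qed.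

Lemma theorem_proof A : T A -> exists ls, pc (rd (enc ls)) (code A).
Proof.
case: pc_canonical => [[pc_complete _] _] /pc_complete [p pc_p].
by have [ls E] := proof_enc pc_p; exists ls; rewrite -E.
Qed.

Lemma proof_and_intro ls A B C : pc (rd (enc ls)) (code A) ->
  List.In (ser B) ls -> List.In (ser C) ls ->
  pc (rd (enc (ls ++ [:: ser (And B C)]))) (code (And B C)).
Proof.
case: pc_canonical => _ [_ [pc_extend _]] pc_A B_ls C_ls.
by apply: pc_extend pc_A _; left; exists B, C.
Qed.

Lemma proof_and_elim ls A B C : pc (rd (enc ls)) (code A) ->
  List.In (ser (And B C)) ls \/ List.In (ser (And C B)) ls ->
  pc (rd (enc (ls ++ [:: ser B]))) (code B).
Proof.
case: pc_canonical => _ [_ [pc_extend _]] pc_A BC_ls.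
by apply: pc_extend pc_A _; right; left; exists C.
Qed.

Lemma proof_of_item ls A B : pc (rd (enc ls)) (code A) -> List.In (ser B) ls ->
  pc (rd (enc (ls ++ [:: ser (And B B); ser B]))) (code B).
Proof.
move=> pc_A B_ls; have pc_BB := proof_and_intro pc_A B_ls B_ls.
rewrite -cat1s catA; apply: (proof_and_elim pc_BB); left.
by apply/List.in_or_app; right; left.
Qed.

Lemma proof_and_cat ls1 ls2 A B : pc (rd (enc ls1)) (code A) -> pc (rd (enc ls2)) (code B) ->
  pc (rd (enc (ls1 ++ ls2 ++ [:: ser (And A B)]))) (code (And A B)).
Proof. by case: pc_canonical => _ [_ [_ [pc_and _]]]; apply: pc_and. Qed.

Lemma proof_and_left ls A B : pc (rd (enc ls)) (code (And A B)) ->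
  pc (rd (enc (ls ++ [:: ser A]))) (code A).
Proof. by case: pc_canonical => _ [_ [_ [_ pc_proj]]] /pc_proj []. Qed.

Lemma proof_and_left_length q A B : pc q (code (And A B)) ->
  exists q', pc q' (code A) /\ ndigits q' = ndigits q + (2 * size (ser A)).+1.
Proof.
move=> pc_q; have [ls Eq] := proof_enc pc_q.
rewrite Eq in pc_q; exists (rd (enc (ls ++ [:: ser A]))); split.
  exact: proof_and_left pc_q.
by rewrite Eq !ndigits_rd size_enc_cat size_enc1.
Qed.

Lemma proof_containing A B : T A -> T B -> exists ls C,
  pc (rd (enc ls)) (code C) /\ List.In (ser A) ls /\ List.In (ser B) ls.
Proof.
move=> /theorem_proof [ls1 pc_A] /theorem_proof [ls2 pc_B].
have pc_AB := proof_and_cat pc_A pc_B.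
set ls := ls1 ++ ls2 ++ [:: ser (And A B)].
have pc_A' := proof_and_left pc_AB.
have AB_ls : List.In (ser (And A B)) (ls ++ [:: ser A]).
  by rewrite /ls !List.in_app_iff /=; tauto.
exists ((ls ++ [:: ser A]) ++ [:: ser B]), B.
split; first exact: proof_and_elim pc_A' (or_intror AB_ls).
by rewrite !List.in_app_iff /=; tauto.
Qed.
End CanonicalProofs.

Section PadProofs.
Variables (fs rs : nat -> nat -> bool) (T : form -> Prop) (pc : nat -> nat -> bool).
Hypotheses (fs0 : fs 0 0) (T_theory : theory fs rs T) (pc_canonical : canonical T pc).

Lemma theory_pad t : T (pad t).
Proof. by apply: (theory_valid T_theory (sentence_pad _ _ fs0)) => M _ rho; apply: sat_pad. Qed.

Definition pad_pair_proof (t c : nat) : Prop := exists ls A,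
  [/\ pc (rd (enc ls)) (code A), List.In (ser (pad t)) ls, List.In (ser (pad t.+1)) ls
    & size (enc ls) <= c].

Lemma pad_pair_proofs : exists K, forall t, pad_pair_proof t (8 * t + K).
Proof.
have pair_mono t c c' : pad_pair_proof t c -> c <= c' -> pad_pair_proof t c'.
  by move=> [ls [A [? ? ? size_ls]]] cc'; exists ls, A; split=> //; lia.
have [K small] : exists K, forall t, t < 20 -> pad_pair_proof t K.
  apply: finite_uniform_bound pair_mono _ => t _.
  have [ls [A [pc_A [t_ls t1_ls]]]] :=
    proof_containing pc_canonical (theory_pad t) (theory_pad t.+1).
  by exists (size (enc ls)), ls, A.
exists K; elim/ltn_ind=> t IH; have [t_small|t_large] := ltnP t 20.
  exact: pair_mono (small t t_small) (leq_addl _ _).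
set t' := (t.-1)./2; have [ls [A [pc_A t'_ls t'1_ls size_ls]]] := IH t' ltac:(lia).
have halves_ls u : t' <= u <= t'.+1 -> List.In (ser (pad u)) ls.
  by move=> u_t'; have [->|->] : u = t' \/ u = t'.+1 by lia.
have pad_t : pad t = And (pad t') (pad (t.-1 - t')) by rewrite padE ltn_geF.
have pad_t1 : pad t.+1 = And (pad t./2) (pad (t - t./2)) by rewrite padE ltn_geF //; lia.
have pc_t : pc (rd (enc (ls ++ [:: ser (pad t)]))) (code (pad t)).
  by rewrite pad_t; apply: (proof_and_intro pc_canonical pc_A); apply: halves_ls; lia.
have pc_t1 : pc (rd (enc ((ls ++ [:: ser (pad t)]) ++ [:: ser (pad t.+1)])))
                (code (pad t.+1)).
  rewrite pad_t1; apply: (proof_and_intro pc_canonical pc_t);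
    apply/List.in_or_app; left; apply: halves_ls; lia.
exists ((ls ++ [:: ser (pad t)]) ++ [:: ser (pad t.+1)]), (pad t.+1); split=> //.
- by rewrite !List.in_app_iff /=; tauto.
- by rewrite List.in_app_iff /=; tauto.
- by rewrite !size_enc_cat !size_enc1 !size_pad; lia.
Qed.

Lemma pad_proofs : exists K, forall j,
  exists ls, pc (rd (enc ls)) (code (pad j)) /\ size (enc ls) <= 14 * j + K.
Proof.
have [K pairs] := pad_pair_proofs; exists (K + 58) => j.
have [ls [A [pc_A j_ls _ size_ls]]] := pairs j.
exists (ls ++ [:: ser (And (pad j) (pad j)); ser (pad j)]); split.
  exact: (proof_of_item pc_canonical pc_A j_ls).
by rewrite -cat1s !size_enc_cat !size_enc1 /= size_cat size_pad; lia.
Qed.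
End PadProofs.

(** * Proof complexity *)

Lemma exists_min_proof_len pc A :
  (exists p, pc_decides pc p A) -> exists m, min_proof_len pc A m.
Proof.
move=> decidable; have [p dec_p p_min] := ex_minnP decidable.
by exists (ndigits p); split=> [|q /p_min /ndigits_monotone //]; exists p.
Qed.

Lemma exists_bounded_max (R : nat -> Prop) b :
  (forall x, R x -> x <= b) -> (exists x, R x) -> exists m, R m /\ forall x, R x -> x <= m.
Proof.
elim: b R => [|b IH] R R_le [x Rx].
  by exists x; split=> // y /R_le; move: (R_le _ Rx); rewrite !leqn0 => /eqP -> /eqP ->.
have [Rb1|nRb1] := classic (R b.+1); first by exists b.+1.
apply: IH; last by exists x.
move=> y Ry; have := R_le _ Ry; rewrite leq_eqVlt => /orP [/eqP Eb|//].
by rewrite -Eb in nRb1.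
Qed.

Lemma exists_proof_complexity pc (P : form -> Prop) (b : nat -> nat) :
  monotone b -> (forall A, P A -> exists p, pc_decides pc p A) ->
  (forall A m, P A -> min_proof_len pc A m -> m <= b (ndigits (code A))) ->
  exists h, proof_complexity pc P h /\ forall n, h n <= b n.
Proof.
move=> b_mono P_decidable P_bound.
pose max_at n v :=
  (forall A m, P A -> ndigits (code A) <= n -> min_proof_len pc A m -> m <= v) /\
  ((exists A, P A /\ ndigits (code A) <= n /\ min_proof_len pc A v) \/
   ((forall A, P A -> n < ndigits (code A)) /\ v = 0)).
suff [h h_max] : exists h, forall n, max_at n (h n) /\ h n <= b n.
  by exists h; split=> n; case: (h_max n).
apply: (ClassicalEpsilon.choice (fun n v => max_at n v /\ v <= b n)) => n.
pose R v := exists A, P A /\ ndigits (code A) <= n /\ min_proof_len pc A v.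
have R_le v : R v -> v <= b n.
  by move=> [A [PA [A_n A_v]]]; apply: leq_trans (P_bound _ _ PA A_v) (b_mono _ _ A_n).
have [[v Rv] | noR] := classic (exists v, R v).
  have [m [[A [PA [A_n A_m]]] m_max]] := exists_bounded_max R_le (ex_intro _ v Rv).
  exists m; do ?split; [|by left; exists A|by apply: R_le; exists A].
  by move=> B m' PB B_n B_m'; apply: m_max; exists B.
exists 0; split=> //; split; first by move=> B m PB B_n B_m; case: noR; exists m, B.
right; split=> // B PB; rewrite ltnNge; apply/negP => B_n.
have [m B_m] := exists_min_proof_len (P_decidable _ PB).
by apply: noR; exists m, B.
Qed.

Lemma bigO_le h h' g : (forall n, h n <= h' n) -> bigO h' g -> bigO h g.
Proof. by move=> hh' [C [N h'g]]; exists C, N => n /h'g; apply: leq_trans. Qed.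

Lemma bigO_linear_add g a K : bigOmega g id -> bigO (fun n => g n + a * n + K) g.
Proof.
move=> [C [N n_g]]; exists (1 + a * C + K), N.+1 => n n_ge.
have := n_g n (ltnW n_ge); rewrite /id => n_le.
have g_pos : 0 < g n by case: (g n) n_le => [|//]; rewrite muln0; lia.
nia.
Qed.

Lemma bigOmega_id_unbounded g m L : bigOmega g id -> exists n, m <= n /\ L <= g n.
Proof.
move=> [C [N n_g]]; exists (N + C * L + m).+1; split; first lia.
have := n_g (N + C * L + m).+1 ltac:(lia); rewrite /id; nia.
Qed.

Lemma exists_crossing (g : nat -> nat) m L : g m < L -> (exists n, m <= n /\ L <= g n) ->
  exists n, [/\ m < n, g n.-1 < L & L <= g n].
Proof.
move=> gm_lt [n0 [m_n0 L_le]].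
have /ex_minnP [n /andP [m_le L_gn] n_min] : exists n, (m <= n) && (L <= g n).
  by exists n0; rewrite m_n0.
have m_lt : m < n.
  by rewrite ltn_neqAle m_le andbT; apply: contraTneq L_gn => <-; rewrite -ltnNge.
exists n; split=> //; rewrite ltnNge; apply/negP => L_le'.
by have := n_min n.-1; rewrite L_le' andbT; lia.
Qed.

(** * The padded proof problem *)

Section PaddedProblem.
Variables (fs rs : nat -> nat -> bool) (T : form -> Prop) (g : nat -> nat).
Variable pc : nat -> nat -> bool.
Hypotheses (fs0 : fs 0 0) (T_theory : theory fs rs T) (pc_canonical : canonical T pc).

Definition padded (S : form) : Prop := exists H j p,
  [/\ S = And H (pad j), T H, pc p (code H) & ndigits p <= g (size (ser S))].

Lemma padded_theorem S : padded S -> T S.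
Proof.
by move=> [H [j [p [-> TH _ _]]]]; exact: (theory_and T_theory TH (theory_pad fs0 T_theory j)).
Qed.

Lemma padded_proof_length : exists K, forall S m, padded S -> min_proof_len pc S m ->
  m <= g (ndigits (code S)) + 16 * ndigits (code S) + K.
Proof.
have [K pad_short] := pad_proofs fs0 T_theory pc_canonical; exists K.+1.
move=> _ m [H [j [p [-> TH pc_p p_short]]]] [_ m_min].
have [ls Ep] := proof_enc pc_canonical pc_p; rewrite Ep ndigits_rd in pc_p p_short.
have [ls_pad [pc_pad pad_size]] := pad_short j.
have := m_min _ (introT orP (or_introl (proof_and_cat pc_canonical pc_p pc_pad))).
have size_S : size (ser (And H (pad j))) = (size (ser H) + maxn j 9).+1.
  by rewrite /= size_cat size_pad.
move: p_short; rewrite /code !ndigits_rd !size_enc_cat size_enc1 -/(code _) size_S; lia.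
Qed.

Variable f : nat -> nat.
Hypotheses (fs1 : fs 1 1) (T_consistent : consistent T).
Hypothesis T_represents : represents_all fs rs T.
Hypotheses (g_computable : computable1 g) (g_linear : bigOmega g id).
Hypothesis f_small : littleo (fun n => f n.+1) g.
Hypothesis pc_computable : computable_pc pc.

Lemma padded_not_bigO h : proof_complexity pc padded h -> ~ bigO h f.
Proof.
move=> h_complexity [C [N h_f]]; have [N' f_g] := f_small (2 * C).
set c := N + N' + 10.
have [H [TH H_hard]] := theorem_without_short_proof fs0 fs1 T_theory T_consistent T_represents
  pc_canonical.1 pc_computable (computable1_shift c 4 2 g_computable).
set a := size (ser H); rewrite /code ndigits_rd -/(code H) -/a in H_hard.
have [L [[p [dec_p ndigits_p]] L_min]] :=
  exists_min_proof_len (theorem_decidable pc_canonical.1 TH).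
have pc_p := decides_theorem T_consistent pc_canonical.1 TH dec_p.
have L_large : g (a + c) + (4 * a + 2) < L by rewrite -ndigits_p; apply: H_hard.
have [n [n_gt gn_lt L_le]] := exists_crossing (leq_ltn_trans (leq_addr _ _) L_large)
  (bigOmega_id_unbounded (a + c) L g_linear).
set S := And H (pad (n - a - 1)).
have size_S : size (ser S) = n by rewrite /= size_cat size_pad; lia.
have padded_S : padded S.
  by exists H, (n - a - 1), p; split=> //; rewrite -/S size_S ndigits_p.
have T_S := padded_theorem padded_S.
have [mS mS_min] := exists_min_proof_len (theorem_decidable pc_canonical.1 T_S).
have mS_le : mS <= h n.
  have [h_ub _] := h_complexity n; apply: h_ub padded_S _ mS_min.
  by rewrite /code ndigits_rd size_S.
have L_le_mS : L <= mS + (2 * a).+1.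
  have [[q [dec_q ndigits_q]] _] := mS_min.
  have [q' [pc_q' ndigits_q']] :=
    proof_and_left_length pc_canonical (decides_theorem T_consistent pc_canonical.1 T_S dec_q).
  by rewrite -ndigits_q -ndigits_q'; apply: L_min; rewrite /pc_decides pc_q'.
have := h_f n ltac:(lia); have := f_g n.-1 ltac:(lia); rewrite prednK; [nia | lia].
Qed.

End PaddedProblem.

Theorem mainTheorem18 (fs rs : nat -> nat -> bool) (T : form -> Prop)
    (g f : nat -> nat) :
  fs 0 0 -> fs 1 1 ->
  theory fs rs T -> consistent T -> comp_enum T -> represents_all fs rs T ->
  computable1 g -> monotone g -> bigOmega g id ->
  littleo (fun n => f n.+1) g ->
  forall pc : nat -> nat -> bool, canonical T pc -> computable_pc pc ->
  exists P : form -> Prop, proof_problem T P /\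
    exists h : nat -> nat, proof_complexity pc P h /\ bigO h g /\ ~ bigO h f.
Proof.
move=> fs0 fs1 T_theory T_consistent _ T_represents g_computable g_mono g_linear f_small
  pc pc_canonical pc_computable.
exists (padded T g pc); split; first exact: (padded_theorem fs0 T_theory).
have [K padded_short] := padded_proof_length g fs0 T_theory pc_canonical.
have b_mono : monotone (fun n => g n + 16 * n + K).
  by move=> m n mn; have := g_mono m n mn; lia.
have [h [h_complexity h_le]] := exists_proof_complexity b_mono
  (fun S PS => theorem_decidable pc_canonical.1 (padded_theorem fs0 T_theory PS)) padded_short.
exists h; split=> //; split; first exact: bigO_le h_le (bigO_linear_add 16 K g_linear).
exact: (padded_not_bigO fs0 T_theory pc_canonical fs1 T_consistent T_represents g_computable
  g_linear f_small pc_computable h_complexity).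
Qed.
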